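(* Let $n\ge 3$ and let $h(q)=q^n+q^{n-2}a_{n-2}+\dots+qa_1+a_0$ with $a_0,\dots,a_{n-2}\in\mathbb{H}$ and $a_{n-2}\neq 0$. Put $\lambda=\big(\max_{0\le j\le n-2}|a_j|\big)^{1/n}$. Then every zero $q\in\mathbb{H}$ of $h$ satisfies $$|q|\le \lambda+\max\{\lambda^2,\lambda^{n-1}\}.$$
   Context: $\mathbb{H}$ denotes the real quaternions with the Euclidean norm $|q|=\sqrt{q\bar q}$. The polynomial $h$ has coefficients written to the right of the powers and is evaluated at $q\in\mathbb{H}$ by direct substitution; a zero of $h$ is a $q\in\mathbb{H}$ with $h(q)=0$. *)

From mathcomp Require Import all_boot all_order all_algebra.
From mathcomp Require Import all_classical all_reals all_analysis.
Set Implicit Arguments. Unset Strict Implicit. Unset Printing Implicit Defensive.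
Import Order.TTheory GRing.Theory Num.Theory.
Local Open Scope ring_scope.

(* Real quaternions x0 + x1 i + x2 j + x3 k over R. *)
Record quat (R : realType) := Quat { q0 : R; q1 : R; q2 : R; q3 : R }.

Section Quat.
Variable R : realType.
Definition qzero : quat R := Quat 0 0 0 0.
Definition qone : quat R := Quat 1 0 0 0.
Definition qadd (p q : quat R) : quat R :=
  Quat (q0 p + q0 q) (q1 p + q1 q) (q2 p + q2 q) (q3 p + q3 q).
(* Hamilton product: i^2 = j^2 = k^2 = ijk = -1. *)
Definition qmul (p q : quat R) : quat R :=
  Quat (q0 p * q0 q - q1 p * q1 q - q2 p * q2 q - q3 p * q3 q)
       (q0 p * q1 q + q1 p * q0 q + q2 p * q3 q - q3 p * q2 q)
       (q0 p * q2 q - q1 p * q3 q + q2 p * q0 q + q3 p * q1 q)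
       (q0 p * q3 q + q1 p * q2 q - q2 p * q1 q + q3 p * q0 q).
Definition qpow (q : quat R) (n : nat) : quat R := iter n (qmul q) qone.
Definition qnorm (q : quat R) : R :=
  Num.sqrt (q0 q ^+ 2 + q1 q ^+ 2 + q2 q ^+ 2 + q3 q ^+ 2).

(* h(q) = q^n + sum_{j=0}^{n-2} q^j a_j  (coefficients on the right) *)
Definition heval (n : nat) (a : nat -> quat R) (q : quat R) : quat R :=
  qadd (qpow q n) (foldr qadd qzero [seq qmul (qpow q j) (a j) | j <- iota 0 n.-1]).
End Quat.

From mathcomp Require Import all_boot all_order all_algebra.
From mathcomp Require Import all_classical all_reals all_analysis.
From mathcomp Require Import ring lra.
Import Order.TTheory GRing.Theory Num.Theory.
Local Open Scope ring_scope.

(* The quaternion norm is multiplicative and subadditive, so a zero q of h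
   satisfies the real inequality |q|^n <= M (1 + |q| + ... + |q|^(n-2)) with
   M = max_j |a_j| = lambda^n.  Writing |q| = lambda t and dividing by
   lambda^n gives t^n <= sum_j lambda^j t^j, and each lambda^j with
   1 <= j <= n-2 is at most d = max(lambda, lambda^(n-2)).  If t > 1 + d the
   right-hand side is below 1 + (t - 1)(t + ... + t^(n-2)) = 1 + t^(n-1) - t
   < t^n, a contradiction; hence |q| <= lambda (1 + d). *)

Section QuaternionNorm.
Context {R : realType}.
Implicit Types p q : quat R.

Definition qnorm2 p : R := q0 p ^+ 2 + q1 p ^+ 2 + q2 p ^+ 2 + q3 p ^+ 2.

Definition qdot p q : R :=
  q0 p * q0 q + q1 p * q1 q + q2 p * q2 q + q3 p * q3 q.

Lemma qnorm2_ge0 p : 0 <= qnorm2 p.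
Proof. by rewrite /qnorm2 !addr_ge0 ?sqr_ge0. Qed.

Lemma qnorm_ge0 p : 0 <= qnorm p.
Proof. exact: sqrtr_ge0. Qed.

Lemma qnorm0 : qnorm (qzero R) = 0.
Proof. by rewrite /qnorm /= expr0n /= !addr0 sqrtr0. Qed.

Lemma qnorm1 : qnorm (qone R) = 1.
Proof. by rewrite /qnorm /= expr0n /= !addr0 expr1n sqrtr1. Qed.

Lemma sqr_qnorm p : qnorm p ^+ 2 = qnorm2 p.
Proof. exact/sqr_sqrtr/qnorm2_ge0. Qed.

Lemma qnorm2_eq0 p : qnorm2 p = 0 -> p = qzero R.
Proof.
case: p => x0 x1 x2 x3; rewrite /qnorm2 /= => /eqP.
rewrite !paddr_eq0 ?addr_ge0 ?sqr_ge0 // !sqrf_eq0.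
by case/andP=> /andP[/andP[/eqP-> /eqP->] /eqP->] /eqP->.
Qed.

Lemma qnorm_gt0 p : p <> qzero R -> 0 < qnorm p.
Proof.
move=> p_neq0; rewrite sqrtr_gt0 lt_def -/(qnorm2 p) qnorm2_ge0 andbT.
by apply/eqP => /qnorm2_eq0.
Qed.

(* Euler's four-square identity. *)
Lemma qnorm_mul p q : qnorm (qmul p q) = qnorm p * qnorm q.
Proof.
rewrite /qnorm -sqrtrM ?qnorm2_ge0 //; congr Num.sqrt.
by case: p => ? ? ? ?; case: q => ? ? ? ? /=; ring.
Qed.

Lemma qnorm_pow q n : qnorm (qpow q n) = qnorm q ^+ n.
Proof. by elim: n => [|n IHn]; rewrite ?qnorm1 // exprS -IHn qnorm_mul. Qed.

(* Cauchy--Schwarz, via Lagrange's identity. *)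
Lemma qdot_le_qnorm p q : qdot p q <= qnorm p * qnorm q.
Proof.
rewrite -sqrtrM ?qnorm2_ge0 //; apply: le_trans (ler_norm _) _.
rewrite -sqrtr_sqr ler_sqrt ?mulr_ge0 ?qnorm2_ge0 // -subr_ge0.
have -> : qnorm2 p * qnorm2 q - qdot p q ^+ 2 =
    (q0 p * q1 q - q1 p * q0 q) ^+ 2 + (q0 p * q2 q - q2 p * q0 q) ^+ 2 +
    (q0 p * q3 q - q3 p * q0 q) ^+ 2 + (q1 p * q2 q - q2 p * q1 q) ^+ 2 +
    (q1 p * q3 q - q3 p * q1 q) ^+ 2 + (q2 p * q3 q - q3 p * q2 q) ^+ 2.
  by rewrite /qnorm2 /qdot; ring.
by rewrite !addr_ge0 ?sqr_ge0.
Qed.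

Lemma qnorm_add p q : qnorm (qadd p q) <= qnorm p + qnorm q.
Proof.
have norm_sum_ge0 : 0 <= qnorm p + qnorm q by rewrite addr_ge0 ?qnorm_ge0.
rewrite -(ger0_norm norm_sum_ge0) -sqrtr_sqr {1}/qnorm -/(qnorm2 _).
rewrite ler_sqrt ?sqr_ge0 //.
have -> : qnorm2 (qadd p q) = qnorm2 p + qnorm2 q + 2 * qdot p q.
  by rewrite /qnorm2 /qdot /=; ring.
rewrite sqrrD !sqr_qnorm -mulr_natr; have := qdot_le_qnorm p q; lra.
Qed.

Lemma qnorm_foldr_add (s : seq (quat R)) :
  qnorm (foldr (@qadd R) (qzero R) s) <= \sum_(p <- s) qnorm p.
Proof.
elim: s => [|p s IHs] /=; first by rewrite big_nil qnorm0.
by rewrite big_cons (le_trans (qnorm_add _ _)) ?lerD.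
Qed.

Lemma qnorm_eq_of_qadd_eq0 p q : qadd p q = qzero R -> qnorm p = qnorm q.
Proof.
case: p => x0 x1 x2 x3; case: q => y0 y1 y2 y3 [] /= s0 s1 s2 s3.
rewrite /qnorm /= -(addr0_eq s0) -(addr0_eq s1) -(addr0_eq s2) -(addr0_eq s3).
by rewrite !sqrrN.
Qed.

Lemma heval_root_qnorm_le {n : nat} {a : nat -> quat R} {q : quat R} :
  heval n a q = qzero R ->
  qnorm q ^+ n <= \sum_(0 <= j < n.-1) qnorm q ^+ j * qnorm (a j).
Proof.
rewrite /heval => /qnorm_eq_of_qadd_eq0; rewrite qnorm_pow => ->.
apply: le_trans (qnorm_foldr_add _) _; rewrite big_map /index_iota subn0.
by apply: ler_sum => j _; rewrite qnorm_mul qnorm_pow.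
Qed.

End QuaternionNorm.

Section CauchyBound.
Context {R : realFieldType}.

Lemma expr_le_max_ends {l : R} {j k : nat} : 0 <= l -> (1 <= j <= k)%N ->
  l ^+ j <= Num.max l (l ^+ k).
Proof.
move=> l_ge0 /andP[j_gt0 j_le_k]; rewrite le_max.
have [l_le1 | l_gt1] := lerP l 1.
  by rewrite -{2}(expr1 l) ler_wiXn2l.
by rewrite ler_weXn2l ?orbT // ltW.
Qed.

(* (t - 1)(t + ... + t^k) telescopes to t^(k+1) - t. *)
Lemma sum_le_telescope (c : nat -> R) (t : R) k :
  1 <= t -> c 0%N <= 1 -> (forall j, (1 <= j <= k)%N -> c j <= t - 1) ->
  \sum_(0 <= j < k.+1) c j * t ^+ j <= 1 + t ^+ k.+1 - t.
Proof.
move=> t_ge1 c0_le1; elim: k => [|k IHk] c_le.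
  by rewrite big_nat1 expr0 mulr1 expr1; lra.
rewrite big_nat_recr //= [t ^+ k.+2]exprS.
have tk_ge0 : 0 <= t ^+ k.+1 by rewrite exprn_ge0 // (le_trans ler01).
have ck_le : c k.+1 * t ^+ k.+1 <= (t - 1) * t ^+ k.+1.
  by rewrite ler_wpM2r // c_le ?leqnn.
have IH : \sum_(0 <= j < k.+1) c j * t ^+ j <= 1 + t ^+ k.+1 - t.
  by apply: IHk => j /andP[j_gt0 j_le_k]; rewrite c_le // j_gt0 leqW.
set u := t ^+ k.+1 in tk_ge0 ck_le IH *; nra.
Qed.

Lemma cauchy_root_bound {l r : R} {k : nat} : 0 < l ->
  r ^+ k.+2 <= \sum_(0 <= j < k.+1) r ^+ j * l ^+ k.+2 ->
  r <= l * (1 + Num.max l (l ^+ k)).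
Proof.
move=> l_gt0 r_root; rewrite leNgt; apply/negP => r_big.
set d := Num.max l (l ^+ k) in r_big.
set t := r / l.
have r_eq : r = l * t by rewrite /t mulrCA divff ?mulr1 // gt_eqF.
have t_big : 1 + d < t by rewrite /t ltr_pdivlMr // mulrC.
have d_ge0 : 0 <= d by rewrite le_max ltW.
have sum_eq : \sum_(0 <= j < k.+1) r ^+ j * l ^+ k.+2 =
    l ^+ k.+2 * \sum_(0 <= j < k.+1) l ^+ j * t ^+ j.
  by rewrite mulr_sumr; apply: eq_bigr => j _; rewrite r_eq exprMn mulrC.
have t_root : t ^+ k.+2 <= \sum_(0 <= j < k.+1) l ^+ j * t ^+ j.
  by rewrite -(ler_pM2l (exprn_gt0 k.+2 l_gt0)) -sum_eq -exprMn -r_eq.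
have t_gt1 : 1 < t by apply: le_lt_trans t_big; rewrite lerDl.
have sum_le : \sum_(0 <= j < k.+1) l ^+ j * t ^+ j <= 1 + t ^+ k.+1 - t.
  apply: sum_le_telescope => [||j jk /=]; [exact: ltW | by rewrite expr0 |].
  by rewrite (le_trans (expr_le_max_ends (ltW l_gt0) jk)) // -/d; lra.
have tk_ge1 : 1 <= t ^+ k.+1 by rewrite exprn_ege1 // ltW.
move: t_root sum_le; rewrite exprS; set u := t ^+ k.+1 in tk_ge1 *; nra.
Qed.
End CauchyBound.

Lemma expr_powR_natV (R : realType) (x : R) n : 0 <= x -> (0 < n)%N ->
  (x `^ (n%:R)^-1) ^+ n = x.
Proof.
move=> x_ge0 n_gt0.
by rewrite -powR_mulrn ?powR_ge0 // -powRrM mulVf ?pnatr_eq0 -?lt0n // powRr1.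
Qed.

Theorem corollary3 (R : realType) (n : nat) (a : nat -> quat R) :
  (3 <= n)%N ->
  a (n - 2)%N <> qzero R ->
  let lambda := (\big[Num.max/0]_(j < n.-1) qnorm (a j)) `^ (n%:R)^-1 in
  forall q : quat R, heval n a q = qzero R ->
  qnorm q <= lambda + Num.max (lambda ^+ 2) (lambda ^+ n.-1).
Proof.
case: n => [|[|[|m]]] // _; rewrite subn2 => a_neq0.
set M := \big[Num.max/0]_(j < m.+2) qnorm (a j) => lambda q q_root.
have a_le_M j : (j < m.+2)%N -> qnorm (a j) <= M.
  by move=> j_lt; apply: (le_bigmax _ (fun i : 'I__ => _) (Ordinal j_lt)).
have M_gt0 : 0 < M by apply: lt_le_trans (a_le_M m.+1 _); rewrite ?qnorm_gt0.
have lambda_gt0 : 0 < lambda by apply: powR_gt0.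
have lambdaXn : lambda ^+ m.+3 = M by apply: expr_powR_natV; rewrite ?ltW.
rewrite /= (exprS _ 1) (exprS _ m.+1) expr1 -(maxr_pMr _ _ (ltW lambda_gt0)).
rewrite -[X in X + _]mulr1 -mulrDr.
apply: cauchy_root_bound lambda_gt0 _; rewrite lambdaXn.
apply: le_trans (heval_root_qnorm_le q_root) _.
apply: ler_sum_nat => j /andP[_ j_lt].
by rewrite ler_wpM2l ?exprn_ge0 ?qnorm_ge0 ?a_le_M.
Qed.
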